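(* In the setting described in the context (with $L=[0,1]$), let $q\in\{1,\dots,n\}$ and assume there exists $A\subseteq\mathcal C$ with $|A|=q$ and $\eta_q(A)=1$. Define $\mu^*:2^{\mathcal C}\to[0,1]$ by $\mu^*(\emptyset)=0$, $\mu^*(X)=\eta_q(X)$ if $0<|X|\le q$, and $\mu^*(X)=\max_{\emptyset\neq Y\subsetneq X,\ |Y|\le q}\eta_q(Y)$ if $|X|>q$. Then $\mu^*$ is a $q$-maxitive capacity and $\max_{1\le k\le N}|S_{\mu^*}(x^{(k)})-\alpha^{(k)}|=\Delta_q$.
   Context: Let $\mathcal C=\{1,\dots,n\}$ and $L=[0,1]$. A capacity is a map $\mu:2^{\mathcal C}\to[0,1]$ with $\mu(\emptyset)=0$, $\mu(\mathcal C)=1$, monotone for inclusion; it is $q$-maxitive if for all $X$ with $|X|>q$, $\mu(X)=\max_{Y\subsetneq X,\ |Y|\le q}\mu(Y)$. Sugeno integral: $S_\mu(x)=\max_{A\subseteq\mathcal C}\min(\min_{i\in A}x_i,\mu(A))$ with $\min_{i\in\emptyset}x_i=1$. Training data: $N$ pairs $(x^{(k)},\alpha^{(k)})$, $x^{(k)}\in[0,1]^n$, $\alpha^{(k)}\in[0,1]$. For nonempty $A$, $m_{k,A}=\min_{i\in A}x^{(k)}_i$. Write $t^+=\max(t,0)$. For $1\le i\le N$ and $0<|A|\le q$, let $\sigma_G(\alpha^{(i)},m_{l,A},\alpha^{(l)})=\min\big(\tfrac{(\alpha^{(i)}-\alpha^{(l)})^+}{2},(m_{l,A}-\alpha^{(l)})^+\big)$,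 $\delta_{i,A}=\max\big((\alpha^{(i)}-m_{i,A})^+,\max_{1\le l\le N}\sigma_G(\alpha^{(i)},m_{l,A},\alpha^{(l)})\big)$, $\delta_i=\min_{0<|A|\le q}\delta_{i,A}$, and $\Delta_q=\max_{1\le i\le N}\delta_i$. For $0<|A|\le q$, $\eta_q(A)=\min_{1\le k\le N}\big(m_{k,A}\to_G\min(\alpha^{(k)}+\Delta_q,1)\big)$, where $a\to_G b=1$ if $a\le b$ and $a\to_G b=b$ otherwise. *)

From mathcomp Require Import all_boot all_order all_algebra.
Set Implicit Arguments. Unset Strict Implicit. Unset Printing Implicit Defensive.
Import Order.TTheory GRing.Theory Num.Theory.
Local Open Scope ring_scope.

Section Defs.
Variable R : realFieldType.
Variable n : nat.

Definition pospart (t : R) : R := Num.max t 0.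

Definition implG (a b : R) : R := if a <= b then 1 else b.

Definition minA (v : 'I_n -> R) (A : {set 'I_n}) : R :=
  \big[Num.min/1]_(i in A) v i.

Definition capacity (mu : {set 'I_n} -> R) : Prop :=
  [/\ mu set0 = 0, mu setT = 1,
      (forall X, 0 <= mu X <= 1) &
      (forall X Y : {set 'I_n}, X \subset Y -> mu X <= mu Y)].

(* q-maxitivity: for |X| > q, mu X = max over Y proper subset of X, |Y| <= q
   (the family always contains set0, so mu set0 is a neutral base value) *)
Definition q_maxitive (q : nat) (mu : {set 'I_n} -> R) : Prop :=
  forall X : {set 'I_n}, (q < #|X|)%N ->
    mu X = \big[Num.max/mu set0]_(Y : {set 'I_n} | (Y \proper X) && (#|Y| <= q)%N) mu Y.

(* Sugeno integral; empty min = 1; the term for A = set0 is 0 so base 0 is exact *)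
Definition sugeno (mu : {set 'I_n} -> R) (v : 'I_n -> R) : R :=
  \big[Num.max/0]_(A : {set 'I_n}) Num.min (minA v A) (mu A).

Variable N : nat.
Variable x : 'I_N -> 'I_n -> R.
Variable alpha : 'I_N -> R.
Variable q : nat.

Definition mkA (k : 'I_N) (A : {set 'I_n}) : R := minA (x k) A.

Definition sigmaG (ai ml al : R) : R :=
  Num.min (pospart (ai - al) / 2) (pospart (ml - al)).

Definition deltaiA (i : 'I_N) (A : {set 'I_n}) : R :=
  Num.max (pospart (alpha i - mkA i A))
          (\big[Num.max/0]_(l : 'I_N) sigmaG (alpha i) (mkA l A) (alpha l)).

(* min over 0 < |A| <= q; all delta_{i,A} lie in [0,1], so base 1 is harmless *)
Definition deltai (i : 'I_N) : R :=
  \big[Num.min/1]_(A : {set 'I_n} | (0 < #|A| <= q)%N) deltaiA i A.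

(* max over 1 <= i <= N; all delta_i >= 0, so base 0 is harmless *)
Definition Deltaq : R := \big[Num.max/0]_(i : 'I_N) deltai i.

Definition etaq (A : {set 'I_n}) : R :=
  \big[Num.min/1]_(k : 'I_N) implG (mkA k A) (Num.min (alpha k + Deltaq) 1).

Definition mustar (X : {set 'I_n}) : R :=
  if X == set0 then 0
  else if (#|X| <= q)%N then etaq X
  else \big[Num.max/0]_(Y : {set 'I_n} | [&& Y != set0, Y \proper X & (#|Y| <= q)%N])
         etaq Y.

End Defs.

From Pilot Require Import Defs.
From mathcomp Require Import all_boot all_order all_algebra.
From mathcomp Require Import lra.
Set Implicit Arguments. Unset Strict Implicit. Unset Printing Implicit Defensive.
Import Order.TTheory GRing.Theory Num.Theory.
Local Open Scope ring_scope.

(* mu*(X) is the largest eta_q(Y) over nonempty Y included in X with |Y| <= q,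
   which makes mu* a monotone q-maxitive capacity; by q-maxitivity the Sugeno
   integral only sees these small sets:
   S(x^k) = max_{0 < |A| <= q} min(m_{k,A}, eta_q(A)).
   Since eta_q(A) <= m_{k,A} ->_G (alpha_k + Delta_q), modus ponens for the
   Goedel implication bounds every term by alpha_k + Delta_q, and a set A with
   delta_{k,A} <= Delta_q gives a term >= alpha_k - Delta_q: the sigma_G part of
   delta_{k,A} controls the implications where m_{l,A} > alpha_l + Delta_q.
   Conversely, if Delta_q = delta_i > 0 and S(x^i) > alpha_i - Delta_q, the
   maximizing set Y has delta_{i,Y} >= Delta_q, carried by some
   sigma_G(alpha_i, m_{l,Y}, alpha_l) >= Delta_q, and then
   S(x^l) >= alpha_l + Delta_q. *)

Section BigMinMaxAttained.
Context {d : Order.disp_t} {T : orderType d} {I : finType}.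
Implicit Types (P : pred I) (F : I -> T).

Lemma bigmax_id_or_attained P F x0 :
  \big[Order.max/x0]_(i | P i) F i = x0 \/
  exists2 i, P i & \big[Order.max/x0]_(i | P i) F i = F i.
Proof.
elim/big_rec: _ => [|i y Pi [->|[j Pj ->]]]; first by left.
- by rewrite maxEle; case: ifP => _; [left | right; exists i].
- by right; rewrite maxEle; case: ifP => _; [exists j | exists i].
Qed.

Lemma bigmin_id_or_attained P F x0 :
  \big[Order.min/x0]_(i | P i) F i = x0 \/
  exists2 i, P i & \big[Order.min/x0]_(i | P i) F i = F i.
Proof.
elim/big_rec: _ => [|i y Pi [->|[j Pj ->]]]; first by left.
- by rewrite minEle; case: ifP => _; [right; exists i | left].
- by right; rewrite minEle; case: ifP => _; [exists i | exists j].
Qed.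

End BigMinMaxAttained.

Section GoedelImplication.
Variable R : realFieldType.
Implicit Types a b t : R.

Lemma le_pospart t : t <= pospart t.
Proof. by rewrite le_max lexx. Qed.

Lemma pospart_ge (c t : R) : 0 < c -> (c <= pospart t) = (c <= t).
Proof. by move=> c_gt0; rewrite le_max [c <= 0]leNgt c_gt0 orbF. Qed.

Lemma implG_ge a b : b <= 1 -> b <= implG a b.
Proof. by rewrite /implG; case: ifP. Qed.

Lemma min_implG_le a b : Num.min a (implG a b) <= b.
Proof. by rewrite /implG; case: ifP => ab; rewrite ge_min ?ab // lexx orbT. Qed.

Lemma implG_antitone a a' b : b <= 1 -> a <= a' -> implG a' b <= implG a b.
Proof.
move=> b_le1 le_aa'; rewrite {1}/implG; case: ifP => [a'b|_]; last exact: implG_ge.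
by rewrite /implG (le_trans le_aa' a'b).
Qed.

Lemma sigmaG_le_implG (ak al m D : R) : 0 <= D -> ak <= 1 -> m <= 1 ->
  sigmaG ak m al <= D -> ak - D <= implG m (Num.min (al + D) 1).
Proof.
move=> D_ge0 ak_le1 m_le1; rewrite /sigmaG /implG ge_min.
have := le_pospart (ak - al); have := le_pospart (m - al).
case: ifPn => [_|]; first lra.
rewrite -ltNge gt_min [1 < m]ltNge m_le1 orbF le_min => ? ? ? /orP[] ?; apply/andP; split; lra.
Qed.

Lemma sigmaG_ge (ai ml al D : R) : 0 < D -> D <= sigmaG ai ml al ->
  al + D <= ml /\ al + D <= ai - D.
Proof.
move=> D_gt0; rewrite /sigmaG le_min pospart_ge // /pospart maxEle.
by case: ifP => ? /andP[? ?]; split; lra.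
Qed.

End GoedelImplication.

Section Sugeno.
Variables (R : realFieldType) (n : nat).
Implicit Types (v : 'I_n -> R) (A B : {set 'I_n}).

(* Unqualified, [minA] is the associativity lemma of [Order.min]. *)

Lemma minA_le1 v A : Defs.minA v A <= 1.
Proof. exact: bigmin_le_id. Qed.

Lemma minA_ge0 v A : (forall i, 0 <= v i) -> 0 <= Defs.minA v A.
Proof. by move=> v_ge0; apply: le_bigmin. Qed.

Lemma minA_subset v A B : A \subset B -> Defs.minA v B <= Defs.minA v A.
Proof.
move=> AB; apply: le_bigmin => [|i iA]; first exact: minA_le1.
exact/bigmin_le_cond/(subsetP AB).
Qed.

Lemma sugeno_q_maxitive q (mu : {set 'I_n} -> R) v : q_maxitive q mu ->
  sugeno mu v =
  \big[Num.max/0]_(A : {set 'I_n} | (#|A| <= q)%N) Num.min (Defs.minA v A) (mu A).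
Proof.
move=> mu_max; apply/le_anti/andP; split; last first.
  by apply: bigmax_le => [|A _]; [exact: bigmax_ge_id | exact: le_bigmax].
apply: bigmax_le => [|X _]; first exact: bigmax_ge_id.
case: (leqP #|X| q) => [Xq|qX].
  exact: le_bigmax_cond.
have [Y YX [Yq ->]] : exists2 Y : {set 'I_n}, Y \subset X & (#|Y| <= q)%N /\ mu X = mu Y.
  rewrite mu_max //.
  have [->|[Y /andP[/properP[YX _] Yq] ->]] := bigmax_id_or_attained
    (fun Y : {set 'I_n} => (Y \proper X) && (#|Y| <= q)%N) mu (mu set0).
  - by exists set0; rewrite ?sub0set ?cards0.
  - by exists Y.
by apply: (bigmax_sup Y) => //; rewrite le_min2 ?minA_subset.
Qed.

End Sugeno.

Section MuStar.
Variables (R : realFieldType) (n N : nat).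
Variables (x : 'I_N -> 'I_n -> R) (alpha : 'I_N -> R) (q : nat).
Hypothesis x01 : forall k i, 0 <= x k i <= 1.
Hypothesis alpha01 : forall k, 0 <= alpha k <= 1.
Implicit Types (A B X Y : {set 'I_n}) (k l : 'I_N).

Local Notation Delta := (Deltaq x alpha q).
Local Notation eta := (etaq x alpha q).
Local Notation mu := (mustar x alpha q).
Local Notation m := (mkA x).
Local Notation S k := (sugeno (mustar x alpha q) (x k)).

Lemma mkA_ge0 k A : 0 <= m k A.
Proof. by apply: minA_ge0 => i; case/andP: (x01 k i). Qed.

Lemma Deltaq_ge0 : 0 <= Delta.
Proof. exact: bigmax_ge_id. Qed.

Lemma etaq_le1 A : eta A <= 1.
Proof. exact: bigmin_le_id. Qed.

Lemma etaq_ge0 A : 0 <= eta A.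
Proof.
apply: le_bigmin => // k _.
have b_le1 : Num.min (alpha k + Delta) 1 <= 1 by rewrite ge_min lexx orbT.
apply: le_trans (implG_ge _ b_le1).
by rewrite le_min ler01 andbT addr_ge0 ?Deltaq_ge0 //; case/andP: (alpha01 k).
Qed.

Lemma etaq_mono A B : A \subset B -> eta A <= eta B.
Proof.
move=> AB; apply: le_bigmin => [|k _]; first exact: etaq_le1.
apply: (bigmin_inf k) => //; apply: implG_antitone; first by rewrite ge_min lexx orbT.
exact: minA_subset.
Qed.

Lemma min_mkA_etaq_le k A : Num.min (m k A) (eta A) <= alpha k + Delta.
Proof.
have eta_le : eta A <= implG (m k A) (Num.min (alpha k + Delta) 1).
  exact: bigmin_le.
apply: le_trans (le_min2 (lexx _) eta_le) _.
by apply: le_trans (min_implG_le _ _) _; rewrite ge_min lexx.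
Qed.

Lemma mustar_set0 : mu set0 = 0.
Proof. by rewrite /mustar eqxx. Qed.

Lemma mustar_small X : X != set0 -> (#|X| <= q)%N -> mu X = eta X.
Proof. by move=> /negbTE X_neq0 Xq; rewrite /mustar X_neq0 Xq. Qed.

Lemma mustar_big X : (q < #|X|)%N ->
  mu X = \big[Num.max/0]_(Y | [&& Y != set0, Y \proper X & (#|Y| <= q)%N]) eta Y.
Proof.
move=> qX; have /negbTE X_neq0 : X != set0 by rewrite -card_gt0 (leq_ltn_trans _ qX).
by rewrite /mustar X_neq0 leqNgt qX.
Qed.

Lemma mustarE X :
  mu X = \big[Num.max/0]_(Y | [&& Y != set0, Y \subset X & (#|Y| <= q)%N]) eta Y.
Proof.
have [->|X_neq0] := eqVneq X set0.
  by rewrite mustar_set0 big_pred0 // => Y; rewrite subset0 andbA andNb.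
case: (leqP #|X| q) => [Xq|qX]; last first.
  rewrite mustar_big //; apply: eq_bigl => Y; rewrite properEcard.
  case: (leqP #|Y| q) => [Yq|_]; last by rewrite !andbF.
  by rewrite (leq_ltn_trans Yq qX) andbT.
rewrite mustar_small //; apply/le_anti/andP; split.
  by apply: (bigmax_sup X); rewrite ?X_neq0 ?subxx.
by apply: bigmax_le => [|Y /and3P[_ YX _]]; [exact: etaq_ge0 | exact: etaq_mono].
Qed.

Lemma mustar_ge0 X : 0 <= mu X.
Proof. by rewrite mustarE; exact: bigmax_ge_id. Qed.

Lemma mustar_le1 X : mu X <= 1.
Proof. by rewrite mustarE; apply: bigmax_le => // Y _; exact: etaq_le1. Qed.

Lemma mustar_mono X Y : X \subset Y -> mu X <= mu Y.
Proof.
move=> XY; rewrite !mustarE; apply: bigmax_le => [|Z /and3P[Z_neq0 ZX Zq]].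
  exact: bigmax_ge_id.
by apply: (bigmax_sup Z) => //; rewrite Z_neq0 (subset_trans ZX XY).
Qed.

Lemma mustar_capacity A : A != set0 -> (#|A| <= q)%N -> eta A = 1 ->
  capacity mu.
Proof.
move=> A_neq0 Aq etaA; split; [exact: mustar_set0 | | | exact: mustar_mono].
  apply/le_anti; rewrite mustar_le1 -etaA -mustar_small //.
  exact/mustar_mono/subsetT.
by move=> X; rewrite mustar_ge0 mustar_le1.
Qed.

Lemma mustar_q_maxitive : q_maxitive q mu.
Proof.
move=> X qX; rewrite mustar_big // mustar_set0; apply/le_anti/andP; split.
  apply: bigmax_le => [|Y /and3P[Y_neq0 YX Yq]]; first exact: bigmax_ge_id.
  by apply: (bigmax_sup Y); rewrite ?YX ?mustar_small.
apply: bigmax_le => [|Y /andP[YX Yq]]; first exact: bigmax_ge_id.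
have [->|Y_neq0] := eqVneq Y set0; first by rewrite mustar_set0 bigmax_ge_id.
by rewrite mustar_small //; apply: (bigmax_sup Y); rewrite ?Y_neq0 ?YX.
Qed.

Lemma sugeno_mustar k :
  S k = \big[Num.max/0]_(A : {set 'I_n} | (0 < #|A| <= q)%N) Num.min (m k A) (eta A).
Proof.
rewrite (sugeno_q_maxitive _ mustar_q_maxitive) (bigD1 set0) ?cards0 //=.
rewrite mustar_set0 (min_r (mkA_ge0 k set0)).
rewrite max_r ?bigmax_ge_id //; apply: eq_big => [A|A /andP[Aq A_neq0]].
  by rewrite card_gt0 andbC.
by rewrite mustar_small.
Qed.

Lemma sugeno_mustar_le k : S k <= alpha k + Delta.
Proof.
rewrite sugeno_mustar; apply: bigmax_le => [|A _]; last exact: min_mkA_etaq_le.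
by rewrite addr_ge0 ?Deltaq_ge0 //; case/andP: (alpha01 k).
Qed.

Lemma sugeno_mustar_ge k : alpha k - Delta <= S k.
Proof.
have S_ge0 : 0 <= S k by exact: bigmax_ge_id.
have /andP[_ alpha_le1] := alpha01 k.
have : deltai x alpha q k <= Delta by exact: le_bigmax.
have [->|[A A_small ->]] : deltai x alpha q k = 1 \/
    exists2 A : {set 'I_n}, (0 < #|A| <= q)%N & deltai x alpha q k = deltaiA x alpha k A.
  - exact: bigmin_id_or_attained.
  - by move=> ?; lra.
rewrite /deltaiA ge_max => /andP[pos_le sigma_le].
rewrite sugeno_mustar; apply: (bigmax_sup A) => //; rewrite le_min; apply/andP; split.
  by have := le_pospart (alpha k - m k A); lra.
apply: le_bigmin => [|l _]; first by have := Deltaq_ge0; lra.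
apply: sigmaG_le_implG => //; [exact: Deltaq_ge0 | exact: minA_le1 |].
by apply: le_trans sigma_le; exact: le_bigmax.
Qed.

Lemma dist_sugeno_mustar_le k : `|S k - alpha k| <= Delta.
Proof.
have := sugeno_mustar_le k; have := sugeno_mustar_ge k.
by rewrite ler_norml => ? ?; apply/andP; split; lra.
Qed.

Lemma dist_sugeno_mustar_ge i l Y : 0 < Delta -> (0 < #|Y| <= q)%N ->
  alpha i - Delta < eta Y -> Delta <= sigmaG (alpha i) (m l Y) (alpha l) ->
  Delta <= `|S l - alpha l|.
Proof.
move=> D_gt0 Y_small eta_gt /(sigmaG_ge D_gt0)[m_ge alpha_ge].
have : alpha l + Delta <= Num.min (m l Y) (eta Y) by rewrite le_min m_ge /=; lra.
have : Num.min (m l Y) (eta Y) <= S l.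
  by rewrite sugeno_mustar; exact: le_bigmax_cond.
by rewrite ler_normr => ? ?; apply/orP; left; lra.
Qed.

Lemma Deltaq_le_dist A0 : (0 < #|A0| <= q)%N ->
  Delta <= \big[Num.max/0]_k `|S k - alpha k|.
Proof.
move=> A0_small; have [D_le0|D_gt0] := leP Delta 0.
  by apply: le_trans D_le0 _; exact: bigmax_ge_id.
have [D0|[i _ D_eq]] : Delta = 0 \/ exists2 i, true & Delta = deltai x alpha q i.
  - exact: bigmax_id_or_attained.
  - by move: D_gt0; rewrite D0 ltxx.
have [S_le|S_gt] := leP (S i) (alpha i - Delta).
  by apply: (bigmax_sup i) => //; rewrite ler_normr; apply/orP; right; lra.
have [Y Y_small S_eq] :
    {Y : {set 'I_n} | (0 < #|Y| <= q)%N & S i = Num.min (m i Y) (eta Y)}.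
  rewrite sugeno_mustar; apply: (eq_bigmax A0) => // A _.
  by rewrite le_min mkA_ge0 etaq_ge0.
move: S_gt; rewrite S_eq lt_min => /andP[m_gt eta_gt].
have : Delta <= deltaiA x alpha i Y by rewrite [X in X <= _]D_eq; exact: bigmin_le_cond.
rewrite /deltaiA le_max pospart_ge // [X in X || _]leNgt.
have -> /= : alpha i - m i Y < Delta by lra.
have [->|[l _ ->] sigma_ge] := bigmax_id_or_attained (fun=> true)
    (fun l => sigmaG (alpha i) (m l Y) (alpha l)) 0; first by rewrite leNgt D_gt0.
apply: (bigmax_sup l) => //; exact: dist_sugeno_mustar_ge Y_small eta_gt sigma_ge.
Qed.

End MuStar.

Theorem proposition3 (R : realFieldType) (n N : nat)
  (x : 'I_N -> 'I_n -> R) (alpha : 'I_N -> R) (q : nat) :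
  (forall k i, 0 <= x k i <= 1) ->
  (forall k, 0 <= alpha k <= 1) ->
  (1 <= q <= n)%N ->
  (exists A : {set 'I_n}, #|A| = q /\ etaq x alpha q A = 1) ->
  capacity (mustar x alpha q) /\ q_maxitive q (mustar x alpha q) /\
  \big[Num.max/0]_(k : 'I_N) `|sugeno (mustar x alpha q) (x k) - alpha k|
    = Deltaq x alpha q.
Proof.
move=> x01 alpha01 /andP[q_gt0 _] [A [cardA etaA]].
have A_neq0 : A != set0 by rewrite -card_gt0 cardA.
have Aq : (#|A| <= q)%N by rewrite cardA.
split; first exact: (mustar_capacity alpha01 A_neq0 Aq etaA).
split; first exact: mustar_q_maxitive.
apply/le_anti/andP; split.
  by apply: bigmax_le => [|k _]; [exact: Deltaq_ge0 | exact: dist_sugeno_mustar_le].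
by apply: (Deltaq_le_dist x01 alpha01 (A0 := A)); rewrite card_gt0 A_neq0.
Qed.
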